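(* Let $(X,d)$ be a metric space, $v,x\in X$, and $0<\varepsilon\le\frac13$. Suppose $P$ is a path $v=p_0,p_1,\ldots,p_l=x$ of points of $X$ such that $d(v,p_i)\le \varepsilon\, d(v,p_{i+1})$ for all $1\le i\le l-1$. Then $d_P(v,x)\le (1+3\varepsilon)\,d(v,x)$.
   Context: $d_P(v,x)$ denotes the length of the path $P$, i.e. $\sum_{i=1}^{l} d(p_{i-1},p_i)$. *)

From Stdlib Require Import Reals.
Open Scope R_scope.

Record MetricSpace := {
  carrier :> Type;
  mdist : carrier -> carrier -> R;
  mdist_nonneg : forall x y, 0 <= mdist x y;
  mdist_eq0 : forall x y, mdist x y = 0 <-> x = y;
  mdist_sym : forall x y, mdist x y = mdist y x;
  mdist_tri : forall x y z, mdist x z <= mdist x y + mdist y z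
}.

Fixpoint path_length (X : MetricSpace) (p : nat -> X) (l : nat) : R :=
  match l with
  | O => 0
  | S k => path_length X p k + mdist X (p k) (p (S k))
  end.

From Stdlib Require Import Reals Lra Lia Psatz.
Open Scope R_scope.

(* Induction on the length of the path, with the invariant
   [d_P(p_0, p_k) <= (1 + 3 eps) d(v, p_k)]: the triangle inequality through [v]
   bounds the new edge by [d(v, p_k) + d(v, p_{k+1})], and the hypothesis
   [d(v, p_k) <= eps d(v, p_{k+1})] turns the whole sum into
   [(1 + (2 + 3 eps) eps) d(v, p_{k+1})], which is small enough exactly when
   [eps <= 1/3]. *)

Lemma mdist_refl (X : MetricSpace) (a : X) : mdist X a a = 0.
Proof. now apply mdist_eq0. Qed.

Section RadialPath.

Variables (X : MetricSpace) (v : X) (eps : R).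
Hypothesis heps1 : eps <= 1/3.

Lemma path_length_radial_step (L : R) (a b : X) :
  L <= (1 + 3 * eps) * mdist X v a ->
  mdist X v a <= eps * mdist X v b ->
  L + mdist X a b <= (1 + 3 * eps) * mdist X v b.
Proof.
  intros HL Hab.
  pose proof (mdist_tri X a v b) as Htri.
  rewrite (mdist_sym X a v) in Htri.
  pose proof (mdist_nonneg X v a).
  pose proof (mdist_nonneg X v b).
  nra.
Qed.

Lemma path_length_radial (p : nat -> X) (k : nat) :
  p 0%nat = v ->
  (forall i : nat, (i < k)%nat -> mdist X v (p i) <= eps * mdist X v (p (S i))) ->
  path_length X p k <= (1 + 3 * eps) * mdist X v (p k).
Proof.
  intros hp0 hstep.
  induction k as [|k IH]; simpl.
  - rewrite hp0, mdist_refl. lra.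
  - apply path_length_radial_step.
    + apply IH. intros i Hi. apply hstep. lia.
    + apply hstep. lia.
Qed.

End RadialPath.

Theorem lemma9 (X : MetricSpace) (v x : X) (eps : R)
  (heps0 : 0 < eps) (heps1 : eps <= 1/3)
  (p : nat -> X) (l : nat)
  (hp0 : p 0%nat = v) (hpl : p l = x)
  (hcond : forall i : nat, (1 <= i)%nat -> (i <= l - 1)%nat ->
             mdist X v (p i) <= eps * mdist X v (p (S i))) :
  path_length X p l <= (1 + 3 * eps) * mdist X v x.
Proof.
  rewrite <- hpl.
  apply path_length_radial; [exact heps1 | exact hp0 |].
  intros [|i] Hi.
  - rewrite hp0, mdist_refl.
    pose proof (mdist_nonneg X v (p 1%nat)). nra.
  - apply hcond; lia.
Qed.
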